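(* Let $F$, $G$, $\Pi$ be as in the context. For every $G$-invariant ergodic probability measure $\mu$ on $\Sigma_A\times I$ we have $\chi^G(\mu)=\chi(\Pi_*\mu)$, where $\chi^G(\mu)=\int\log|g_{\omega_0}'(x)|\,d\mu(\omega,x)$ and $\chi(\nu)=\int\log|f_{\xi_0}'(p)|\,d\nu(\xi,p)$. In particular, if $\mu$ is hyperbolic with respect to $G$ (i.e. $\chi^G(\mu)\ne0$), then $\Pi_*\mu$ is hyperbolic with respect to $F$.
   Context: $I=[0,1]$, $R(x)=1-x$. $F(\xi,p)=(\sigma(\xi),f_{\xi_0}(p))$ on $\Sigma_N\times I$, $\Sigma_N=\{1,\ldots,N\}^{\mathbb Z}$, with $f_i$ $C^1$-diffeomorphisms onto their images. $\mathcal I_P$ / $\mathcal I_R$: indices of orientation preserving / reversing $f_i$. $A=(a_{ij})_{i,j=1}^{2N}$ with $a_{ij}=1$ if ($i\in\mathcal I_P$, $j\le N$), or ($i\in\mathcal I_R$, $j>N$), or ($i-N\in\mathcal I_P$, $j>N$), or ($i-N\in\mathcal I_R$, $j\le N$), else $0$; $\Sigma_A$ the $A$-admissible sequences in $\{1,\ldots,2N\}^{\mathbb Z}$ with shift $\sigma_A$; $\pi(\omega)_n=\overline{\omega_n}$ ($\overline i=i$ for $i\le N$, $\overline i=i-N$ otherwise). $G(\omega,x)=(\sigma_A(\omega),g_{\omega_0}(x))$ with $g_i=f_i$, $g_{i+N}=R\circ f_i\circ R$ ($i\in\mathcal I_P$), $g_i=R\circ f_i$, $g_{i+N}=f_i\circ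 R$ ($i\in\mathcal I_R$). $C=\{\omega\colon\omega_0\le N\}$; $\Pi(\omega,x)=(\pi(\omega),x)$ if $\omega\in C$, $(\pi(\omega),R(x))$ otherwise. A measure is hyperbolic if its fiber Lyapunov exponent is nonzero. *)

From HB Require Import structures.
From mathcomp Require Import all_boot all_order all_algebra.
From mathcomp Require Import all_classical all_reals all_analysis.
Set Implicit Arguments. Unset Strict Implicit. Unset Printing Implicit Defensive.
Import Order.TTheory GRing.Theory Num.Theory.
Import numFieldNormedType.Exports.
Local Open Scope classical_set_scope.
Local Open Scope ring_scope.

(* Symbols are natural numbers; the
   alphabets {1..N} and {1..2N} are imposed by the subsets [SigmaN] and
   [SigmaA] below. *)
Definition seqZ := (int -> nat).
Definition cylinders : set (set seqZ) :=
  [set C | exists (n : int) (a : nat), C = [set w : seqZ | w n = a]].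
Definition Seq := g_sigma_algebraType cylinders.

Definition Xsp (R : realType) := (Seq * R)%type.

Definition I01 {R : realType} : set R := [set x : R | 0 <= x <= 1].

Definition shift (w : Seq) : Seq := fun n => w (n + 1)%R.

Definition refl {R : realType} (x : R) : R := 1 - x.

Definition SigmaN (N : nat) : set Seq :=
  [set w | forall n, (1 <= w n <= N)%N].

Definition or_pres {R : realType} (h : R -> R) : Prop :=
  forall x, I01 x -> 0 < derive1 h x.
Definition or_rev {R : realType} (h : R -> R) : Prop :=
  forall x, I01 x -> derive1 h x < 0.

Definition inIP {R : realType} (N : nat) (f : nat -> R -> R) (i : nat) : Prop :=
  (1 <= i <= N)%N /\ or_pres (f i).
Definition inIR {R : realType} (N : nat) (f : nat -> R -> R) (i : nat) : Prop :=
  (1 <= i <= N)%N /\ or_rev (f i).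

Definition Aadj {R : realType} (N : nat) (f : nat -> R -> R) (i j : nat) : Prop :=
  (inIP N f i /\ (j <= N)%N) \/ (inIR N f i /\ (N < j)%N) \/
  (inIP N f (i - N) /\ (N < j)%N) \/ (inIR N f (i - N) /\ (j <= N)%N).

Definition SigmaA {R : realType} (N : nat) (f : nat -> R -> R) : set Seq :=
  [set w | forall n, (1 <= w n <= N + N)%N /\ Aadj N f (w n) (w (n + 1)%R)].

Definition bar (N i : nat) : nat := if (i <= N)%N then i else (i - N)%N.
Definition piA (N : nat) (w : Seq) : Seq := fun n => bar N (w n).

Definition gmap {R : realType} (N : nat) (f : nat -> R -> R) (i : nat) : R -> R :=
  if (i <= N)%N then
    (if `[< or_pres (f i) >] then f i else refl \o f i)
  else
    (if `[< or_pres (f (i - N)%N) >] then refl \o f (i - N)%N \o refl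
     else f (i - N)%N \o refl).

Definition Fmap {R : realType} (f : nat -> R -> R) (z : Xsp R) : Xsp R :=
  (shift z.1, f (z.1 0) z.2).
Definition Gmap {R : realType} (N : nat) (f : nat -> R -> R) (z : Xsp R) : Xsp R :=
  (shift z.1, gmap N f (z.1 0) z.2).

Definition Ccyl (N : nat) : set Seq := [set w | (w 0 <= N)%N].
Definition Pimap {R : realType} (N : nat) (z : Xsp R) : Xsp R :=
  if (z.1 0 <= N)%N then (piA N z.1, z.2) else (piA N z.1, refl z.2).

(* invariance and ergodicity of a measure concentrated on the invariant
   set S (S = Sigma_A x I for G, S = Sigma_N x I for F). *)
Definition invariant_on {R : realType} (S : set (Xsp R)) (T : Xsp R -> Xsp R)
  (mu : set (Xsp R) -> \bar R) : Prop :=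
  forall B, measurable B -> mu ((T @^-1` B) `&` S) = mu B.
Definition ergodic_on {R : realType} (S : set (Xsp R)) (T : Xsp R -> Xsp R)
  (mu : set (Xsp R) -> \bar R) : Prop :=
  forall B, measurable B -> (T @^-1` B) `&` S = B `&` S ->
    mu B = 0%E \/ mu B = 1%E.

Definition chiG {R : realType} (N : nat) (f : nat -> R -> R)
  (mu : set (Xsp R) -> \bar R) : \bar R :=
  \int[mu]_(z in SigmaA N f `*` I01)
     (ln `|derive1 (gmap N f (z.1 0)) z.2|)%:E.
Definition chiF {R : realType} (N : nat) (f : nat -> R -> R)
  (nu : set (Xsp R) -> \bar R) : \bar R :=
  \int[nu]_(z in SigmaN N `*` I01) (ln `|derive1 (f (z.1 0)) z.2|)%:E.

From HB Require Import structures.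
From mathcomp Require Import all_boot all_order all_algebra.
From mathcomp Require Import all_classical all_reals all_analysis.
From mathcomp Require Import measurable_realfun zify lra.
Import Order.TTheory GRing.Theory Num.Theory.
Import numFieldNormedType.Exports.
Local Open Scope classical_set_scope.
Local Open Scope ring_scope.

(* On the cylinder [w 0 = i] the fibre map g_i is f_(bar i), pre- and/or
   post-composed with the reflection R, whose derivative is -1.  Hence
   |g_(w 0)'(x)| = |f_(xi 0)'(p)| for (xi, p) = Pi (w, x), and Pi maps
   Sigma_A x I into Sigma_N x I.  As mu is carried by Sigma_A x I, the change
   of variables formula for the push-forward gives chi^G(mu) = chi(Pi_* mu).
   It is applied to the positive and negative parts of the integrand
   separately, so no integrability of log|f'| is needed. *)

Section reflection.
Variable R : realType.
Implicit Types (g : R -> R).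

Lemma is_derive_refl (x : R) : is_derive x 1 (@refl R) (-1).
Proof.
have -> : @refl R = (cst 1 - id : R^o -> R^o) by apply/funext.
by apply: is_derive_eq; rewrite sub0r.
Qed.

Lemma derivable_refl (x : R) : derivable (@refl R) x 1.
Proof. by have h := is_derive_refl x; exact: ex_derive. Qed.

Lemma derive1_refl (x : R) : derive1 (@refl R) x = -1.
Proof. by have h := is_derive_refl x; rewrite derive1E derive_val. Qed.

Lemma derivable_refl_comp g x : derivable g x 1 -> derivable (refl \o g) x 1.
Proof.
move=> /derivable1_diffP dg; apply/derivable1_diffP.
by apply: differentiable_comp => //; apply/derivable1_diffP/derivable_refl.
Qed.

Lemma derive1_refl_comp g x : derivable g x 1 ->
  derive1 (refl \o g) x = - derive1 g x.
Proof. by move=> dg; rewrite derive1_comp ?derivable_refl // derive1_refl mulN1r. Qed.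

Lemma derive1_comp_refl g x : derivable g (refl x) 1 ->
  derive1 (g \o refl) x = - derive1 g (refl x).
Proof. by move=> dg; rewrite derive1_comp ?derivable_refl // derive1_refl mulrN1. Qed.

Lemma I01_refl (x : R) : I01 x -> I01 (refl x).
Proof. by rewrite /I01 /refl /= => /andP[x0 x1]; apply/andP; split; lra. Qed.

End reflection.

Lemma bar_range {N i : nat} : (1 <= i <= N + N)%N -> (1 <= bar N i <= N)%N.
Proof. by rewrite /bar; case: ifP; lia. Qed.

Lemma normr_derive1_gmap {R : realType} N (f : nat -> R -> R) i (x : R) :
  (forall y, derivable (f (bar N i)) y 1) ->
  `|derive1 (gmap N f i) x| =
  `|derive1 (f (bar N i)) (if (i <= N)%N then x else refl x)|.
Proof.
rewrite /gmap /bar; case: ifP => _ df; case: asboolP => _ //.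
- by rewrite derive1_refl_comp ?normrN.
- rewrite derive1_comp_refl; last exact: derivable_refl_comp.
  by rewrite normrN derive1_refl_comp ?normrN.
- by rewrite derive1_comp_refl ?normrN.
Qed.

Lemma normr_derive1_Pimap {R : realType} N (f : nat -> R -> R) (z : Xsp R) :
  (forall y, derivable (f (bar N (z.1 0))) y 1) ->
  `|derive1 (f ((Pimap N z).1 0)) (Pimap N z).2| =
  `|derive1 (gmap N f (z.1 0)) z.2|.
Proof. by move=> df; rewrite normr_derive1_gmap // /Pimap; case: ifP. Qed.

Lemma Pimap_SigmaA {R : realType} N (f : nat -> R -> R) (z : Xsp R) :
  (SigmaA N f `*` I01) z -> (SigmaN N `*` I01) (Pimap N z).
Proof.
case: z => w x [/= Aw Ix].
have Npi : SigmaN N (piA N w) by move=> n; exact/bar_range/(Aw n).1.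
by rewrite /Pimap; case: ifP => _; split => //; exact: I01_refl.
Qed.

Lemma measurable_cylinder (n : int) (a : nat) : measurable [set w : Seq | w n = a].
Proof. by apply: sub_sigma_algebra; exists n, a. Qed.

Lemma measurable_coord (P : nat -> Prop) (n : int) : measurable [set w : Seq | P (w n)].
Proof.
have -> : [set w : Seq | P (w n)] = \bigcup_(a in P) [set w : Seq | w n = a].
  by apply/seteqP; split => [w /= Pw|w [a Pa /= ->]] //; exists (w n).
by apply: bigcup_measurable => a _; exact: measurable_cylinder.
Qed.

Lemma measurable_coord2 (Q : nat -> nat -> Prop) (n m : int) :
  measurable [set w : Seq | Q (w n) (w m)].
Proof.
have -> : [set w : Seq | Q (w n) (w m)] =
    \bigcup_(a in setT) ([set w : Seq | w n = a] `&` [set w : Seq | Q a (w m)]).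
  by apply/seteqP; split => [w /= Qw|w [a _ /= [<-]]] //; exists (w n).
apply: bigcup_measurable => a _.
by apply: measurableI; [exact: measurable_cylinder|exact: measurable_coord].
Qed.

Lemma measurable_forall_int d (T : measurableType d) (S : int -> set T) :
  (forall n, measurable (S n)) -> measurable [set x | forall n, S n x].
Proof.
move=> mS.
have -> : [set x | forall n, S n x] = \bigcap_(k in setT) (S (Posz k) `&` S (Negz k)).
  apply/seteqP; split => [x /= Sx k _|x /= Sx [k|k]]; first by split; apply: Sx.
  - by case: (Sx k I).
  - by case: (Sx k I).
by apply: bigcap_measurableType => k _; apply: measurableI.
Qed.

Lemma measurable_SigmaN N : measurable (SigmaN N).
Proof.
apply: measurable_forall_int => n.
exact: (measurable_coord (fun k => (1 <= k <= N)%N)).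
Qed.

Lemma measurable_SigmaA {R : realType} N (f : nat -> R -> R) : measurable (SigmaA N f).
Proof.
apply: measurable_forall_int => n.
exact: (measurable_coord2 (fun a b => (1 <= a <= N + N)%N /\ Aadj N f a b)).
Qed.

Lemma measurable_I01 {R : realType} : measurable (@I01 R).
Proof.
have -> : @I01 R = `[0, 1]%classic by apply/seteqP; split => x; rewrite /I01 /= in_itv.
exact: measurable_itv.
Qed.

Lemma measurable_piA N : measurable_fun setT (piA N).
Proof.
apply: (measurability (rT := Seq) cylinders) => //.
move=> _ [_ [n [a ->]] <-]; rewrite setTI.
exact: (measurable_coord (fun k => bar N k = a)).
Qed.

Lemma measurable_Pimap {R : realType} N : measurable_fun setT (@Pimap R N).
Proof.
apply/measurable_fun_pairP; split.
  have -> : fst \o @Pimap R N = piA N \o fst.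
    by apply/funext => z /=; rewrite /Pimap; case: ifP.
  exact: measurableT_comp (measurable_piA N) measurable_fst.
have -> : snd \o @Pimap R N = (fun z => if (z.1 0 <= N)%N then z.2 else refl z.2).
  by apply/funext => z /=; rewrite /Pimap; case: ifP.
apply: measurable_fun_if => //.
- move=> _ B _; rewrite setTI.
  have -> : (fun z : Xsp R => (z.1 0 <= N)%N) @^-1` B =
      [set w : Seq | B (w 0 <= N)%N] `*` setT.
    by apply/seteqP; split => z /=; [split|case].
  by apply: measurableX => //; exact: (measurable_coord (fun k => B (k <= N)%N)).
- exact: measurable_funTS measurable_snd.
- apply: measurable_funTS; apply: measurableT_comp measurable_snd.
  exact: measurable_funB.
Qed.

Lemma measurable_fun_by_symbol {R : realType} (D : set (Xsp R)) (K : set nat)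
    (phi : nat -> R -> R) :
  measurable D -> (forall z, D z -> K (z.1 0)) ->
  (forall k, K k -> measurable_fun setT (phi k)) ->
  measurable_fun D (fun z => phi (z.1 0) z.2).
Proof.
move=> mD DK mphi _ B mB.
have -> : D `&` (fun z => phi (z.1 0) z.2) @^-1` B =
    \bigcup_(k in K) (D `&` ([set w : Seq | w 0 = k] `*` (phi k @^-1` B))).
  apply/seteqP; split => [z [Dz Bz]|z [k Kk [Dz [/= -> Bz]]]] //.
  by exists (z.1 0); [exact: DK|split].
apply: bigcup_measurable => k Kk; apply: measurableI => //.
apply: measurableX; first exact: measurable_cylinder.
by rewrite -[_ @^-1` _]setTI; exact: mphi.
Qed.

Lemma measurable_ln_normr_derive1 {R : realType} (g : R -> R) :
  continuous (derive1 g) -> measurable_fun setT (fun x => ln `|derive1 g x|).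
Proof.
move=> cg; apply: measurableT_comp; first exact: measurable_ln.
by apply: measurableT_comp; [exact: normr_measurable|exact: continuous_measurable_fun].
Qed.

Section pushforward_conull.
Local Open Scope ereal_scope.
Context {d d'} {X : measurableType d} {Y : measurableType d'} {R : realType}.
Context {mu : {measure set X -> \bar R}} {phi : X -> Y} {D : set X} {E : set Y}.
Hypotheses (mphi : measurable_fun setT phi) (mD : measurable D) (mE : measurable E).
Hypotheses (muDC : mu (~` D) = 0) (phiDE : forall x, D x -> E (phi x)).

Let ge0_integral_pushforward_conull (h : Y -> \bar R) :
  measurable_fun E h -> (forall y, E y -> 0 <= h y) ->
  \int[pushforward mu phi]_(y in E) h y = \int[mu]_(x in D) h (phi x).
Proof.
move=> mh h0.
have mphiE : measurable (phi @^-1` E) by rewrite -[_ @^-1` _]setTI; exact: mphi.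
rewrite ge0_integral_pushforward //; last by move=> y /[!inE]; exact: h0.
rewrite (ge0_negligible_integral _ _ _ _ muDC) //; first last.
- by move=> x /h0.
- have phiE : phi @` (phi @^-1` E) `<=` E by move=> _ [x Ex <-].
  exact: measurable_comp mE phiE mh (measurable_funTS mphi).
- exact: measurableC.
by rewrite setDE setCK setIidr.
Qed.

Lemma integral_pushforward_conull (h : Y -> \bar R) : measurable_fun E h ->
  \int[pushforward mu phi]_(y in E) h y = \int[mu]_(x in D) h (phi x).
Proof.
move=> mh; rewrite [LHS]integralE [RHS]integralE.
rewrite !ge0_integral_pushforward_conull //.
- by rewrite (funepos_comp h phi) (funeneg_comp h phi).
- exact: measurable_funeneg.
- exact: measurable_funepos.
Qed.

End pushforward_conull.

Theorem corollary3p19 (R : realType) (N : nat) (f : nat -> R -> R)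
  (hC1 : forall i, (1 <= i <= N)%N ->
           (forall x : R, derivable (f i) x 1) /\ continuous (derive1 (f i) : R -> R))
  (hinj : forall i, (1 <= i <= N)%N ->
           forall x y, I01 x -> I01 y -> f i x = f i y -> x = y)
  (hder : forall i, (1 <= i <= N)%N -> forall x, I01 x -> derive1 (f i) x != 0)
  (himg : forall i, (1 <= i <= N)%N -> forall x, I01 x -> I01 (f i x))
  (mu : probability (Xsp R) R)
  (hsupp : mu (SigmaA N f `*` I01) = 1%E)
  (hinv : invariant_on (SigmaA N f `*` I01) (Gmap N f) mu)
  (herg : ergodic_on (SigmaA N f `*` I01) (Gmap N f) mu) :
  chiG N f mu = chiF N f (pushforward mu (Pimap N)) /\
  (chiG N f mu != 0%E -> chiF N f (pushforward mu (Pimap N)) != 0%E).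
Proof.
have mDA : measurable (SigmaA N f `*` @I01 R).
  by apply: measurableX; [exact: measurable_SigmaA|exact: measurable_I01].
have mDN : measurable (SigmaN N `*` @I01 R).
  by apply: measurableX; [exact: measurable_SigmaN|exact: measurable_I01].
have muDAC : mu (~` (SigmaA N f `*` I01)) = 0%E.
  by rewrite probability_setC // hsupp subee.
have mhF : measurable_fun (SigmaN N `*` I01)
    (fun z : Xsp R => (ln `|derive1 (f (z.1 0)) z.2|)%:E).
  apply/measurable_EFinP.
  apply: (@measurable_fun_by_symbol R _ [set k | (1 <= k <= N)%N]
    (fun k x => ln `|derive1 (f k) x|)) => //.
  - by move=> z [Nz _]; exact: Nz.
  - by move=> k /hC1 [_]; exact: measurable_ln_normr_derive1.
have chi_eq : chiF N f (pushforward mu (Pimap N)) = chiG N f mu.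
  rewrite /chiF (integral_pushforward_conull (measurable_Pimap N) mDA mDN muDAC
    (Pimap_SigmaA N f) _ mhF).
  apply: eq_integral => -[w x] /[!inE] -[/= Aw _].
  by rewrite normr_derive1_Pimap //; case: (hC1 _ (bar_range (Aw 0).1)).
by rewrite chi_eq.
Qed.
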